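(* Let $W(\omega_1)$ be the space of all countable ordinals with the order topology. If $Y$ is an infinite Tychonoff space of countable weight that is a continuous image of $W(\omega_1)$, then $Y$ is not homogeneous.
   Context: A space $Y$ is homogeneous if for any $y,z\in Y$ there is a homeomorphism of $Y$ onto itself mapping $y$ to $z$. *)

From HB Require Import structures.
From mathcomp Require Import all_boot all_order all_algebra.
From mathcomp Require Import all_classical all_reals all_analysis.
Set Implicit Arguments. Unset Strict Implicit. Unset Printing Implicit Defensive.
Import Order.TTheory GRing.Theory Num.Theory.
Local Open Scope classical_set_scope.
Local Open Scope order_scope.

(* T (a totally ordered type with its order topology) is order-isomorphic to
   omega_1, i.e. T is (a copy of) the space W(omega_1) of countable ordinals:
   the order is a well-order, T is uncountable, and every proper initial
   segment is countable. *)
Definition is_W_omega1 {d} (T : orderTopologicalType d) : Prop :=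
  [/\ (forall A : set T, A !=set0 -> exists2 a, A a & forall b, A b -> a <= b),
      ~ countable [set: T]
    & forall x : T, countable [set y : T | y < x]].

Definition tychonoff_space (Y : topologicalType) : Prop :=
  completely_regular_space Y /\ accessible_space Y.

Definition homogeneous (Y : topologicalType) : Prop :=
  forall y z : Y, exists f g : Y -> Y,
    [/\ continuous f, continuous g, cancel f g, cancel g f & f y = z].

From HB Require Import structures.
From mathcomp Require Import all_boot all_order all_algebra.
From mathcomp Require Import all_classical all_reals all_analysis.
From mathcomp Require Import Rstruct.
Import Order.TTheory.
Local Open Scope classical_set_scope.

(* Every sequence of countable ordinals is bounded, so it has a liminf, which is
   a cluster point; hence W(omega_1) and its continuous image Y are countably
   compact.  Countably many basic open sets of Y have preimages that are either
   bounded or cofinal; above all the bounds, two distinct values of f would give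
   two cofinal preimages of basic sets with disjoint closures, and an increasing
   sequence alternating between them converges to a point whose image lies in
   both closures.  So f is eventually constant and Y is countable.  A countable,
   countably compact regular space has an isolated point (a Baire-type argument),
   while an infinite countably compact space has a non-isolated one: the cluster
   point of an injective sequence.  A homogeneous space cannot have both. *)

Lemma countable_setU {T} (A B : set T) :
  countable A -> countable B -> countable (A `|` B).
Proof.
move=> cA cB.
have -> : A `|` B = \bigcup_(b in [set: bool]) (if b then A else B).
  apply/seteqP; split => x.
    by case=> ?; [exists true | exists false].
  by case=> -[] _ ?; [left | right].
by apply: bigcup_countable => [|[]] //; exact: countableP.
Qed.

Lemma infinite_injective_seq {T} :
  infinite_set [set: T] -> exists x : nat -> T, injective x.
Proof.
move=> /infiniteP /card_leP[g].
exists (fun n => val (g (SigSub (mem_set (I : [set: nat] n))))) => m n /val_inj.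
by move=> /'inj_g; rewrite !in_setT => /(_ isT isT) /(congr1 val).
Qed.

Lemma countable_enumeration {T} :
  countable [set: T] -> [set: T] !=set0 ->
  exists e : nat -> T, forall y, exists n, e n = y.
Proof.
move=> /pfcard_geP[-> [] // | [e]].
by exists e => y; have [n _ <-] := 'surj_e (I : [set: T] y); exists n.
Qed.

Lemma nbhs_left_itv {d} {T : orderTopologicalType d} (s : T) (N : set T) :
  nbhs s N ->
  (exists2 t, (t < s)%O & forall z, (t < z)%O -> (z <= s)%O -> N z) \/
  (forall z, (z <= s)%O -> N z).
Proof.
rewrite itv_nbhsE => -[[p q] [oi si] sub].
move: si; rewrite itv_boundlr => /andP[ps sq].
have below z : (z <= s)%O -> (BRight z <= q)%O.
  by move=> zs; apply: le_trans sq; rewrite bnd_simp.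
case: p oi ps sub => [b t|b] oi ps sub.
- have bF := itv_open_ends_lside oi; subst b.
  left; exists t; first by move: ps; rewrite bnd_simp.
  by move=> z tz zs; apply: sub; rewrite /= itv_boundlr below // andbT bnd_simp.
- have bT := itv_open_ends_linfty oi; subst b.
  by right => z zs; apply: sub; rewrite /= itv_boundlr below.
Qed.

Section countable_ordinals.
Local Open Scope order_scope.
Context {d : Order.disp_t} {W : orderTopologicalType d}.
Hypothesis HW : is_W_omega1 W.

Definition cofinal (A : set W) := forall c, exists2 z, c <= z & A z.

Lemma W_countable_ub {I : Type} {S : set I} (h : I -> W) :
  countable S -> exists b, forall i, S i -> h i <= b.
Proof.
case: HW => _ uncW cnt cS.
have [b Ub] : exists b, ~ (\bigcup_(i in S) [set y | y < h i]) b.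
  apply/existsNP => covered; apply: uncW.
  suff -> : [set: W] = \bigcup_(i in S) [set y | y < h i].
    exact: bigcup_countable.
  by apply/seteqP; split => // x _; exact: covered.
by exists b => i Si; rewrite leNgt; apply/negP => bh; apply: Ub; exists i.
Qed.

Lemma W_liminf (x : nat -> W) : exists s,
  (forall M, exists2 n, (M <= n)%N & x n <= s) /\
  (forall t, t < s -> exists M, forall n, (M <= n)%N -> t < x n).
Proof.
have [b xb] := W_countable_ub x (countableP [set: nat]).
case: HW => wf _ _.
set A := [set s | forall M, exists2 n, (M <= n)%N & x n <= s].
have [s As s_min] : exists2 s, A s & forall c, A c -> s <= c.
  by apply: wf; exists b => M; exists M => //; exact: xb.
exists s; split => // t ts.
have [M HM] : exists M, ~ exists2 n, (M <= n)%N & x n <= t.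
  by apply/existsNP => At; move: (s_min t At); rewrite leNgt ts.
by exists M => n Mn; rewrite ltNge; apply/negP => xt; apply: HM; exists n.
Qed.

Lemma W_cluster (x : nat -> W) : exists s, cluster (x @ \oo) s.
Proof.
have [s [often evtl]] := W_liminf x.
exists s => A N [M _ MA] /nbhs_left_itv [[t ts tN]|sN].
- have [M' HM'] := evtl t ts.
  have [n Mn xs] := often (maxn M M').
  exists (x n); split; first by apply: MA; exact: leq_trans (leq_maxl _ _) Mn.
  by apply: tN xs; apply: HM'; exact: leq_trans (leq_maxr _ _) Mn.
- have [n Mn xs] := often M.
  by exists (x n); split; [exact: MA | exact: sN].
Qed.

Lemma W_nondecreasing_cvg (x : nat -> W) :
  nondecreasing_seq x -> exists s : W, x @ \oo --> s.
Proof.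
move=> x_nd; have [s [often evtl]] := W_liminf x.
have xs n : x n <= s.
  by have [m nm xms] := often n; exact: le_trans (x_nd _ _ nm) xms.
exists s => N /nbhs_left_itv [[t ts tN]|sN].
- by have [M HM] := evtl t ts; exists M => // n /HM tx; exact: tN tx (xs n).
- by exists 0%N => // n _; exact: sN.
Qed.

Lemma W_nonempty : [set: W] !=set0.
Proof.
by apply/set0P/negP => /eqP W0; case: HW => _ uncW _; apply: uncW; rewrite W0.
Qed.

Lemma W_countable_cofinal_threshold {I : Type} {S : set I} (P : I -> set W) :
  countable S ->
  exists b, forall i, S i -> forall x, b <= x -> P i x -> cofinal (P i).
Proof.
move=> cS; have [w0 _] := W_nonempty.
have bound i : exists c, ~ cofinal (P i) -> forall z, P i z -> z < c.
  have [cof|/existsNP[c Hc]] := pselect (cofinal (P i)); first by exists w0.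
  by exists c => _ z Pz; rewrite ltNge; apply/negP => cz; apply: Hc; exists z.
have [c Hc] := choice bound; have [b Hb] := W_countable_ub c cS.
exists b => i Si x bx Px; apply: contrapT => notcof.
by have := lt_le_trans (Hc i notcof x Px) (le_trans (Hb i Si) bx); rewrite ltxx.
Qed.

(* The limit of an increasing sequence alternating between A and B. *)
Lemma W_cofinal_closure {A B : set W} :
  cofinal A -> cofinal B -> exists s, closure A s /\ closure B s.
Proof.
move=> cofA cofB; have [w0 _] := W_nonempty.
have /choice[g gP] : forall cb : W * bool,
    exists z, cb.1 <= z /\ (if cb.2 then A else B) z.
  move=> -[c []] /=.
    by have [z cz Az] := cofA c; exists z.
  by have [z cz Bz] := cofB c; exists z.
pose p := fix p n := if n is m.+1 then g (p m, odd m) else w0.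
have p_nd : nondecreasing_seq p.
  by apply/nondecreasing_seqP => n; exact: (gP (p n, odd n)).1.
have [s ps] := W_nondecreasing_cvg p p_nd.
have closure_p (b : bool) : closure (if b then A else B) s.
  move=> N /ps [M _ MN]; pose n := (M.*2 + b)%N.
  exists (p n.+1); split.
    by have := (gP (p n, odd n)).2; rewrite /= oddD odd_double /= oddb.
  by apply: MN; apply: ltnW; rewrite ltnS /n -addnn -addnA leq_addr.
by exists s; split; [exact: (closure_p true) | exact: (closure_p false)].
Qed.
End countable_ordinals.

Section regular_accessible.
Context {Y : topologicalType}.
Hypotheses (regY : regular_space Y) (T1Y : accessible_space Y).

Lemma regular_closures_disjoint {a b : Y} : a <> b ->
  exists2 A, nbhs a A & exists2 B, nbhs b B & closure A `&` closure B = set0.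
Proof.
move=> ab.
have [A nA clA] := regY a (~` [set b])
  (open_nbhs_nbhs (conj (closed_openC (@accessible_closed_set1 _ T1Y b)) ab)).
have nbA : (~` closure A) b by move=> /clA; apply.
have [B nB clB] := regY b (~` closure A)
  (open_nbhs_nbhs (conj (closed_openC (@closed_closure _ A)) nbA)).
by exists A => //; exists B => //; apply/seteqP; split => // y [clAy /clB].
Qed.

Lemma open_avoid_point (V : set Y) (q : Y) :
  (forall y : Y, ~ nbhs y [set y]) -> open V -> V !=set0 ->
  exists V', [/\ open V', V' !=set0 & closure V' `<=` V `\ q].
Proof.
move=> noiso oV [p Vp].
have [r [Vr rq]] : exists r, V r /\ r <> q.
  have [pq|] := pselect (p = q); last by exists p.
  apply: contrapT => none; apply: (noiso p).
  apply: filterS (open_nbhs_nbhs (conj oV Vp)) => r Vr.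
  by apply: contrapT => rp; apply: none; exists r; rewrite -pq.
have oVq : open (V `\ q).
  by apply: openI => //; exact/closed_openC/accessible_closed_set1.
have [U nU clU] := regY r _ (open_nbhs_nbhs (conj oVq (conj Vr rq))).
exists (interior U); split; [exact: open_interior | by exists r |].
by apply: subset_trans clU; apply: closureS; exact: interior_subset.
Qed.

(* Nested nonempty open sets V_n whose closures miss the n-th point of Y: a
   cluster point of a sequence picked in the V_n lies in every closure, so it
   is no point of Y at all. *)
Lemma countable_countably_compact_isolated :
  countable [set: Y] -> [set: Y] !=set0 ->
  (forall y : nat -> Y, exists p, cluster (y @ \oo) p) ->
  exists p : Y, nbhs p [set p].
Proof.
move=> cY Y0 ccY; apply: contrapT => /forallNP noiso.
have [e e_surj] := countable_enumeration cY Y0.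
have /choice[G GP] : forall Vq : set Y * Y,
    exists V', open Vq.1 -> Vq.1 !=set0 ->
    [/\ open V', V' !=set0 & closure V' `<=` Vq.1 `\ Vq.2].
  move=> [V q] /=; have [[oV V0]|] := pselect (open V /\ V !=set0).
    by have [V' ?] := open_avoid_point V q noiso oV V0; exists V'.
  by move=> nV; exists set0 => oV V0; exfalso; apply: nV.
pose V := fix V n := if n is m.+1 then G (V m, e m) else [set: Y].
have V_open n : open (V n) /\ V n !=set0.
  by elim: n => [|n [oV V0]]; [split; [exact: openT|] | case: (GP (V n, e n))].
have V_closure n : closure (V n.+1) `<=` V n `\ e n.
  by have [oV V0] := V_open n; case: (GP (V n, e n)).
have V_sub m n : (m <= n)%N -> V n `<=` V m.
  move=> /subnK <-; elim: (n - m)%N => // k IH.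
  by move=> y /subset_closure /V_closure [/IH].
have /choice[z zV] : forall n, exists z, V n z by move=> n; case: (V_open n).
have [p clp] := ccY z; have [k ekp] := e_surj p.
have z_ev : (z @ \oo) (V k.+1) by exists k.+1 => // n /V_sub; apply; exact: zV.
rewrite clusterE in clp.
by have [_] := V_closure k p (clp _ z_ev); apply; rewrite ekp.
Qed.

End regular_accessible.

Lemma homogeneous_isolated {Y : topologicalType} {y z : Y} :
  homogeneous Y -> nbhs y [set y] -> nbhs z [set z].
Proof.
move=> homY ny; have [h [g [_ gc hK gK hyz]]] := homY y z.
have gz : g z = y by rewrite -hyz hK.
have -> : [set z] = g @^-1` [set y].
  by apply/seteqP; split => [w -> // | w /= gw]; rewrite -(gK w) gw.
by apply: gc; rewrite gz.
Qed.

Lemma cluster_injective_not_isolated {Y : topologicalType} {x : nat -> Y} {p} :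
  injective x -> cluster (x @ \oo) p -> ~ nbhs p [set p].
Proof.
move=> x_inj clp np.
have hits M : exists2 n, (M <= n)%N & x n = p.
  have ev : (x @ \oo) (x @` [set n | (M <= n)%N]).
    by exists M => // n Mn; exists n.
  by have [y [[n Mn <-] /= xnp]] := clp _ _ ev np; exists n.
have [n _ xn] := hits 0%N; have [m nm xm] := hits n.+1.
by move: nm; rewrite (x_inj m n) ?ltnn // xm xn.
Qed.

Section continuous_image.
Local Open Scope order_scope.
Context {d : Order.disp_t} {W : orderTopologicalType d} {Y : topologicalType}.
Variable f : W -> Y.
Hypotheses (HW : is_W_omega1 W) (fc : continuous f).

Lemma W_image_cluster : f @` [set: W] = [set: Y] ->
  forall y : nat -> Y, exists p, cluster (y @ \oo) p.
Proof.
move=> fsurj y.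
have /choice[x fx] : forall n, exists w, f w = y n.
  move=> n; have [w _ <-] : (f @` [set: W]) (y n) by rewrite fsurj.
  by exists w.
have [s cls] := W_cluster HW x.
exists (f s) => A N [M _ MA] /fc Ns.
have ev : (x @ \oo) (f @^-1` A) by exists M => // n /MA /=; rewrite fx.
by have [w [Aw Nw]] := cls _ _ ev Ns; exists (f w).
Qed.

Lemma W_image_eventually_constant : regular_space Y -> accessible_space Y ->
  @second_countable Y -> exists b, forall x, b <= x -> f x = f b.
Proof.
move=> regY T1Y [B cB [_ basB]].
have [b Hb] := W_countable_cofinal_threshold HW (fun U => f @^-1` U) cB.
exists b => x bx; apply: contrapT => fxb.
have [A nA [C nC AC0]] := regular_closures_disjoint regY T1Y fxb.
have [U [BU Ufx] UA] := basB (f x) _ nA.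
have [V [BV Vfb] VC] := basB (f b) _ nC.
have [s [clU clV]] :=
  W_cofinal_closure HW (Hb U BU x bx Ufx) (Hb V BV b (lexx b) Vfb).
have closure_image S : closure (f @^-1` S) s -> closure S (f s).
  by move=> clS N /fc /clS [w [Sw Nw]]; exists (f w).
have : set0 (f s).
  rewrite -AC0; split.
  - exact: closureS UA _ (closure_image U clU).
  - exact: closureS VC _ (closure_image V clV).
by [].
Qed.

Lemma W_image_countable : f @` [set: W] = [set: Y] ->
  regular_space Y -> accessible_space Y -> @second_countable Y ->
  countable [set: Y].
Proof.
move=> fsurj regY T1Y scY.
have [b fb] := W_image_eventually_constant regY T1Y scY.
have -> : [set: Y] = f @` [set w | w < b] `|` [set f b].
  apply/seteqP; split => // y _.
  move: (I : [set: Y] y); rewrite -fsurj => -[w _ <-].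
  by case: (ltP w b) => [wb | bw]; [left; exists w | right; exact: fb].
apply: countable_setU (countable1 _).
by apply: card_le_trans (card_image_le f _) _; case: HW => _ _ /(_ b).
Qed.

End continuous_image.

Theorem mainTheorem3 (d : Order.disp_t) (W : orderTopologicalType d)
  (Y : topologicalType) (f : W -> Y) :
  is_W_omega1 W ->
  tychonoff_space Y ->
  @second_countable Y ->
  infinite_set [set: Y] ->
  continuous f ->
  f @` [set: W] = [set: Y] ->
  ~ homogeneous Y.
Proof.
move=> HW [crY T1Y] scY infY fc fsurj homY.
have regY : regular_space Y :=
  completely_regular_regular (R := Rdefinitions.R) crY.
have ccY := W_image_cluster f HW fc fsurj.
have cY := W_image_countable f HW fc fsurj regY T1Y scY.
have [p isol_p] :=
  countable_countably_compact_isolated regY T1Y cY (infinite_setN0 infY) ccY.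
have [x x_inj] := infinite_injective_seq infY.
have [q clq] := ccY x.
apply: cluster_injective_not_isolated x_inj clq _.
exact: homogeneous_isolated homY isol_p.
Qed.
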